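(* Let $G=(X,\Sigma,\longrightarrow,X_0)$ and $R=(Z,\Sigma,\longrightarrow,Z_0)$ be automata. For any $\Sigma_{ucr}$-controllability set $E$ from $G$ to $R$, $\mathcal{A}(E)\in\mathit{SPR}(G,R)$; i.e., $\mathcal{A}(E)$ is $\Sigma_{uc}$-admissible w.r.t. $G$ and $\mathcal{A}(E)\|G\sqsubseteq_{cc}R$.
   Context: An automaton is a 4-tuple $A=(Q,\Sigma,\longrightarrow,Q_0)$ with state set $Q$, finite event set $\Sigma$, ${\longrightarrow}\subseteq Q\times\Sigma\times Q$ and $\emptyset\neq Q_0\subseteq Q$. Write $q\xrightarrow{\sigma}q'$ for $(q,\sigma,q')\in{\longrightarrow}$, $q\xrightarrow{\sigma}$ if some such $q'$ exists; extend to strings. A state is reachable if it is reached from an initial state by some string. Events are partitioned into uncontrollable $\Sigma_{uc}$ and controllable $\Sigma_c$; $\Sigma_r\subseteq\Sigma$ is a fixed set of required events. For a supervisor $S=(Y,\Sigma,\longrightarrow,Y_0)$, $S\|G=(Y\times X,\Sigma,\longrightarrow,Y_0\times X_0)$ with $(y,x)\xrightarrow{\sigma}(y',x')$ iff $y\xrightarrow{\sigma}y'$ and $x\xrightarrow{\sigma}x'$. $S$ is $\Sigma_{uc}$-admissible w.r.t. $G$ if for every reachable $(y,x)$ of $S\|G$ and $\sigma\in\Sigma_{uc}$, $x\xrightarrow{\sigma}$ implies $(y,x)\xrightarrow{\sigma}$. For automata $A_1,A_2$ with state sets $Q_1,Q_2$ and initial sets $Q_{01},Q_{02}$, $\Phi\subseteq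 Q_1\times Q_2$ is a cc-simulation if (initial state) every $q_0\in Q_{01}$ has $p_0\in Q_{02}$ with $(q_0,p_0)\in\Phi$; (forward) for $(q,p)\in\Phi$, $\sigma\in\Sigma$, $q\xrightarrow{\sigma}q'$ there is $p'$ with $p\xrightarrow{\sigma}p'$, $(q',p')\in\Phi$; ($\Sigma_r$-backward) for $(q,p)\in\Phi$, $\sigma\in\Sigma_r$, $p\xrightarrow{\sigma}p'$ there is $q'$ with $q\xrightarrow{\sigma}q'$, $(q',p')\in\Phi$. $A_1\sqsubseteq_{cc}A_2$ means one exists. $\mathit{SPR}(G,R)$ is the set of $\Sigma_{uc}$-admissible supervisors $S$ with $S\|G\sqsubseteq_{cc}R$. For $W,W'\subseteq X\times Z$: $\mathit{match}_{G,R}(W,\sigma,W')$ iff for all $(x,z)\in W$ and $x\xrightarrow{\sigma}x'$ there is $z'$ with $z\xrightarrow{\sigma}z'$ and $(x',z')\in W'$. $E\subseteq\wp(X\times Z)$ is a $\Sigma_{ucr}$-controllability set from $G$ to $R$ if: (istate) some $W_0\in E$ satisfies $\forall x_0\in X_0\,\exists z_0\in Z_0\,((x_0,z_0)\in W_0)$; (a) for every $W\in E$, $\sigma\in\Sigma_{uc}$ there is $W'\in E$ with $\mathit{match}_{G,R}(W,\sigma,W')$; (b) for every $W\in E$, $(x,z)\in W$, $\sigma\in\Sigma_r$, $z\xrightarrow{\sigma}z'$, there exist $x'$, $W'\in E$ with $x\xrightarrow{\sigma}x'$, $(x',z')\in W'$, $\mathit{match}_{G,R}(W,\sigma,W')$.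 For such $E$, $E^*=\bigcup_{\widetilde W\in E}\wp(\widetilde W)$, $\mathrm{Succ}_\sigma(W)=\bigcup_{(x,z)\in W}\{x':x\xrightarrow{\sigma}x'\}\times\{z':z\xrightarrow{\sigma}z'\}$, and $\mathcal{A}(E)=(E^*,\Sigma,\longrightarrow,I_E)$ with $I_E=\{W_0\in E^*:\forall x_0\in X_0\,\exists z_0\in Z_0\,((x_0,z_0)\in W_0)\text{ and }W_0\subseteq X_0\times Z_0\}$ and $W\xrightarrow{\sigma}W'$ iff (i) there exist $(x,z)\in W$, $(x',z')\in W'$ with $x\xrightarrow{\sigma}x'$, $z\xrightarrow{\sigma}z'$; (ii) $\mathit{match}_{G,R}(W,\sigma,W')$; (iii) $W'\subseteq\mathrm{Succ}_\sigma(W)$. *)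

From mathcomp Require Import all_boot.

(* An automaton (Q, Sigma, -->, Q0); nonemptiness of Q0 is stated separately
   via [is_automaton]. Subsets are Prop-valued predicates. *)
Record automaton (Sigma : Type) := Automaton {
  state : Type;
  trans : state -> Sigma -> state -> Prop;
  init  : state -> Prop }.

Arguments Automaton {Sigma} state trans init.
Arguments state {Sigma} a.
Arguments trans {Sigma} a _ _ _.
Arguments init {Sigma} a _.

Definition is_automaton (Sigma : Type) (A : automaton Sigma) : Prop :=
  exists q, init A q.

Inductive trans_str (Sigma : Type) (A : automaton Sigma) :
  state A -> seq Sigma -> state A -> Prop :=
| ts_nil q : trans_str Sigma A q [::] q
| ts_cons q s q' w q'' :
    trans A q s q' -> trans_str Sigma A q' w q'' -> trans_str Sigma A q (s :: w) q''.

Definition reachable (Sigma : Type) (A : automaton Sigma) (q : state A) : Prop :=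
  exists q0 w, init A q0 /\ trans_str Sigma A q0 w q.

Definition sync (Sigma : Type) (S G : automaton Sigma) : automaton Sigma :=
  Automaton (state S * state G)%type
    (fun p s p' => trans S p.1 s p'.1 /\ trans G p.2 s p'.2)
    (fun p => init S p.1 /\ init G p.2).

Definition admissible (Sigma : Type) (uc : Sigma -> Prop)
    (S G : automaton Sigma) : Prop :=
  forall (p : state (sync Sigma S G)), reachable Sigma (sync Sigma S G) p ->
  forall s, uc s -> (exists x', trans G p.2 s x') ->
  exists p', trans (sync Sigma S G) p s p'.

Definition cc_simulation (Sigma : Type) (r : Sigma -> Prop)
    (A1 A2 : automaton Sigma) (Phi : state A1 -> state A2 -> Prop) : Prop :=
  (forall q0, init A1 q0 -> exists p0, init A2 p0 /\ Phi q0 p0) /\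
  (forall q p, Phi q p -> forall s q', trans A1 q s q' ->
     exists p', trans A2 p s p' /\ Phi q' p') /\
  (forall q p, Phi q p -> forall s, r s -> forall p', trans A2 p s p' ->
     exists q', trans A1 q s q' /\ Phi q' p').

Definition cc_le (Sigma : Type) (r : Sigma -> Prop) (A1 A2 : automaton Sigma) : Prop :=
  exists Phi, cc_simulation Sigma r A1 A2 Phi.

Definition SPR (Sigma : Type) (uc r : Sigma -> Prop)
    (G R : automaton Sigma) (S : automaton Sigma) : Prop :=
  is_automaton Sigma S /\ admissible Sigma uc S G /\ cc_le Sigma r (sync Sigma S G) R.

Section Ctrl.
Variables (Sigma : Type) (G R : automaton Sigma).
Local Notation X := (state G).
Local Notation Z := (state R).

Definition rel_set := (X * Z)%type -> Prop.

Definition match_GR (W : rel_set) (s : Sigma) (W' : rel_set) : Prop :=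
  forall x z, W (x, z) -> forall x', trans G x s x' ->
  exists z', trans R z s z' /\ W' (x', z').

Definition controllability_set (uc r : Sigma -> Prop) (E : rel_set -> Prop) : Prop :=
  (exists W0, E W0 /\ forall x0, init G x0 -> exists z0, init R z0 /\ W0 (x0, z0)) /\
  (forall W, E W -> forall s, uc s -> exists W', E W' /\ match_GR W s W') /\
  (forall W, E W -> forall x z, W (x, z) -> forall s, r s -> forall z',
     trans R z s z' ->
     exists x' W', trans G x s x' /\ E W' /\ W' (x', z') /\ match_GR W s W').

Definition Estar (E : rel_set -> Prop) (W : rel_set) : Prop :=
  exists Wt, E Wt /\ forall p, W p -> Wt p.

Definition Succ (W : rel_set) (s : Sigma) : rel_set :=
  fun p => exists x z, W (x, z) /\ trans G x s p.1 /\ trans R z s p.2.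

Definition AE (E : rel_set -> Prop) : automaton Sigma :=
  Automaton {W : rel_set | Estar E W}
    (fun W s W' =>
       (exists x z x' z', proj1_sig W (x, z) /\ proj1_sig W' (x', z') /\
                          trans G x s x' /\ trans R z s z') /\
       match_GR (proj1_sig W) s (proj1_sig W') /\
       (forall p, proj1_sig W' p -> Succ (proj1_sig W) s p))
    (fun W =>
       (forall x0, init G x0 -> exists z0, init R z0 /\ proj1_sig W (x0, z0)) /\
       (forall p, proj1_sig W p -> init G p.1 /\ init R p.2)).
End Ctrl.
Arguments is_automaton {Sigma} A.
Arguments reachable {Sigma} A q.
Arguments sync {Sigma} S G.
Arguments admissible {Sigma} uc S G.
Arguments cc_simulation {Sigma} r A1 A2 Phi.
Arguments cc_le {Sigma} r A1 A2.
Arguments SPR {Sigma} uc r G R S.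
Arguments rel_set {Sigma} G R.
Arguments match_GR {Sigma} G R W s W'.
Arguments controllability_set {Sigma} G R uc r E.
Arguments Estar {Sigma} G R E W.
Arguments Succ {Sigma} G R W s _.
Arguments AE {Sigma} G R E.

From mathcomp Require Import all_boot.

Set Implicit Arguments.
Unset Strict Implicit.

(* Relate a state (W, x) of A(E) || G to every z with (x, z) in W.  The match
   condition (ii) on the transitions of A(E) carries such a partner along every
   step, which gives the forward clause and, from an initial state, a partner
   for every reachable state.  The moves needed for admissibility and for the
   Sigma_r-backward clause come from conditions (a) and (b): the W' in E they
   provide is cut down to W' intersected with Succ_s(W), which lies in E^* and
   satisfies (i)-(iii), so it is a legal successor of W. *)

Section ControllabilitySupervisor.
Variables (Sigma : Type) (G R : automaton Sigma) (E : rel_set G R -> Prop).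

Local Notation AE := (AE G R E).
Local Notation supervised := (sync AE G).

Definition restrict_succ (W : rel_set G R) (s : Sigma) (W' : rel_set G R) :
    rel_set G R :=
  fun p => W' p /\ Succ G R W s p.

Lemma Estar_restrict_succ W s W' : E W' -> Estar G R E (restrict_succ W s W').
Proof. by move=> EW'; exists W'; split=> // p []. Qed.

Lemma match_restrict_succ (W Wt W' : rel_set G R) s :
    (forall p, W p -> Wt p) -> match_GR G R Wt s W' ->
  match_GR G R W s (restrict_succ W s W').
Proof.
move=> sub_W_Wt mWt x z Wxz x' Gxx'.
have [z' [Rzz' W'x'z']] := mWt _ _ (sub_W_Wt _ Wxz) _ Gxx'.
by exists z'; split=> //; split=> //; exists x, z.
Qed.

Lemma AE_trans_restrict_succ (W : state AE) (Wt W' : rel_set G R) s x z x' z' :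
    (forall p, proj1_sig W p -> Wt p) -> E W' -> match_GR G R Wt s W' ->
    proj1_sig W (x, z) -> trans G x s x' -> trans R z s z' -> W' (x', z') ->
  exists V : state AE, trans AE W s V /\ proj1_sig V (x', z').
Proof.
move=> sub_W_Wt EW' mWt Wxz Gxx' Rzz' W'x'z'.
have x'z'_succ : Succ G R (proj1_sig W) s (x', z') by exists x, z.
exists (exist _ _ (Estar_restrict_succ (proj1_sig W) s EW')); split=> //=.
split; last split.
- by exists x, z, x', z'.
- exact: match_restrict_succ sub_W_Wt mWt.
- by move=> p [].
Qed.

Definition partner (p : state supervised) (z : state R) : Prop :=
  proj1_sig p.1 (p.2, z).

Lemma partner_init p :
  init supervised p -> exists z, init R z /\ partner p z.
Proof. by move=> [[init_W _] Gx]; apply: init_W. Qed.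

Lemma partner_trans p z s p' :
    partner p z -> trans supervised p s p' ->
  exists z', trans R z s z' /\ partner p' z'.
Proof. by move=> pz [[_ [mW _]] Gxx']; exact: mW pz _ Gxx'. Qed.

Lemma reachable_partner p : reachable supervised p -> exists z, partner p z.
Proof.
case=> p0 [w [init_p0 path_p0]].
have [z0 [_ p0z0]] := partner_init init_p0.
elim: path_p0 z0 p0z0 => [q | q s q' w' q'' step _ IH] z q_z; first by exists z.
have [z' [_ q'z']] := partner_trans q_z step.
exact: IH q'z'.
Qed.

Lemma AE_is_automaton :
    (exists W0, E W0 /\
       forall x0, init G x0 -> exists z0, init R z0 /\ W0 (x0, z0)) ->
  is_automaton AE.
Proof.
case=> W0 [EW0 W0_init].
pose I0 : rel_set G R := fun p => W0 p /\ init G p.1 /\ init R p.2.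
have I0_star : Estar G R E I0 by exists W0; split=> // p [].
exists (exist _ I0 I0_star); split=> [x0 Gx0 | p []] //=.
by have [z0 [Rz0 W0z0]] := W0_init _ Gx0; exists z0.
Qed.

Lemma AE_admissible (uc : Sigma -> Prop) :
    (forall W, E W -> forall s, uc s -> exists W', E W' /\ match_GR G R W s W') ->
  admissible uc AE G.
Proof.
move=> ctrl_uc [W x] /reachable_partner [z pz] s uc_s [x' /= Gxx'].
have [Wt [EWt sub_W_Wt]] := proj2_sig W.
have [W' [EW' mWt]] := ctrl_uc _ EWt _ uc_s.
have [z' [Rzz' W'x'z']] := mWt _ _ (sub_W_Wt _ pz) _ Gxx'.
have [V [WV _]] := AE_trans_restrict_succ sub_W_Wt EW' mWt pz Gxx' Rzz' W'x'z'.
by exists (V, x').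
Qed.

Lemma partner_cc_simulation (r : Sigma -> Prop) :
    (forall W, E W -> forall x z, W (x, z) -> forall s, r s -> forall z',
       trans R z s z' ->
       exists x' W', trans G x s x' /\ E W' /\ W' (x', z') /\
                     match_GR G R W s W') ->
  cc_simulation r supervised R partner.
Proof.
move=> ctrl_r; split; last split.
- exact: partner_init.
- move=> p z pz s p'; exact: partner_trans.
- move=> [W x] z /= pz s r_s z' Rzz'.
  have [Wt [EWt sub_W_Wt]] := proj2_sig W.
  have [x' [W' [Gxx' [EW' [W'x'z' mWt]]]]] :=
    ctrl_r _ EWt _ _ (sub_W_Wt _ pz) _ r_s _ Rzz'.
  have [V [WV Vx'z']] :=
    AE_trans_restrict_succ sub_W_Wt EW' mWt pz Gxx' Rzz' W'x'z'.
  by exists (V, x').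
Qed.

End ControllabilitySupervisor.

Theorem lemma3 (Sigma : finType) (uc r : Sigma -> Prop)
    (G R : automaton Sigma)
    (HG : is_automaton G) (HR : is_automaton R)
    (E : rel_set G R -> Prop)
    (HE : controllability_set G R uc r E) :
  SPR uc r G R (AE G R E).
Proof.
case: HE => [init_E [ctrl_uc ctrl_r]].
split; first exact: AE_is_automaton init_E.
split; first exact: AE_admissible ctrl_uc.
by exists (@partner _ G R E); apply: partner_cc_simulation ctrl_r.
Qed.
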